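(* Let $X$, $Y$ be $d$-dimensional normal pseudomanifolds such that $Y$ is obtained from $X$ by starring a new vertex in a facet of $X$. Then $Y$ is a stacked $d$-sphere if and only if $X$ is a stacked $d$-sphere.
   Context: A simplicial complex is a finite set of finite sets closed under taking subsets; an element of size $i+1$ is an $i$-face (the empty set is the unique $(-1)$-face). A pure $d$-dimensional complex has all maximal faces (facets) of dimension $d$. The link of a face $\alpha$ is $\mathrm{lk}_X(\alpha)=\{\beta\in X:\beta\cap\alpha=\emptyset,\ \alpha\cup\beta\in X\}$. A $d$-dimensional normal pseudomanifold ($d\ge1$) is a pure $d$-dimensional simplicial complex in which every $(d-1)$-face lies in exactly two facets and the link of every face of dimension $\le d-2$ (including the empty face) is connected. If $\sigma$ is a facet of a pure $d$-dimensional complex $X$ and $v\notin V(X)$, starring $v$ in $\sigma$ gives the complex whose facets are the facets of $X$ other than $\sigma$ together with the sets $\tau\cup\{v\}$ for the $(d-1)$-faces $\tau\subset\sigma$. The standard $d$-sphere $S^d_{d+2}$ is the complex of all proper subsets of a $(d+2)$-set; a stacked $d$-sphere is a complex obtained from $S^d_{d+2}$ by finitely many starrings. *)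

From HB Require Import structures.
From mathcomp Require Import all_boot.
From mathcomp Require Import finmap.
Set Implicit Arguments. Unset Strict Implicit. Unset Printing Implicit Defensive.
Local Open Scope fset_scope.

Notation cplx := {fset {fset nat}}.

Definition is_complex (X : cplx) : Prop :=
  forall s t : {fset nat}, s \in X -> t `<=` s -> t \in X.

Definition verts (X : cplx) : {fset nat} := \bigcup_(s <- X) s.

Definition is_facet (X : cplx) (s : {fset nat}) : bool :=
  (s \in X) && all (fun t : {fset nat} => ~~ (s `<` t)) X.

Definition facets (X : cplx) : cplx := [fset s in X | is_facet X s].

(* pure d-dimensional: nonempty of dimension d, all facets of dimension d
   (an i-face has i+1 elements) *)
Definition pure (d : nat) (X : cplx) : Prop :=
  is_complex X /\ (exists s, s \in X /\ #|` s| = d.+1) /\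
  (forall s, is_facet X s -> #|` s| = d.+1).

Definition link (X : cplx) (a : {fset nat}) : cplx :=
  [fset b in X | fdisjoint b a && ((a `|` b) \in X)].

Definition adj (X : cplx) : rel nat := fun x y => [fset x; y] \in X.

Definition connected (X : cplx) : Prop :=
  verts X != fset0 /\
  forall u w, u \in verts X -> w \in verts X ->
    exists p : seq nat, path (adj X) u p /\ last u p = w.

Definition normal_pseudomanifold (d : nat) (X : cplx) : Prop :=
  1 <= d /\ pure d X /\
  (forall t, t \in X -> #|` t| = d ->
      #|` [fset s in X | is_facet X s && (t `<=` s)]| = 2) /\
  (forall a, a \in X -> #|` a| <= d - 1 -> connected (link X a)).

Definition gen (F : cplx) : cplx := \bigcup_(s <- F) fpowerset s.

Definition star (d : nat) (X : cplx) (sg : {fset nat}) (v : nat) : cplx :=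
  gen ((facets X `\ sg) `|`
       [fset t `|` [fset v] | t in [fset t in fpowerset sg | #|` t| == d]]).

Definition starred (d : nat) (X Y : cplx) : Prop :=
  exists sg v, is_facet X sg /\ v \notin verts X /\ Y = star d X sg v.

Definition std_sphere (A : {fset nat}) : cplx := fpowerset A `\ A.

Inductive stacked_sphere (d : nat) : cplx -> Prop :=
| stacked_base A : #|` A| = d.+2 -> stacked_sphere d (std_sphere A)
| stacked_step X sg v : stacked_sphere d X -> is_facet X sg ->
    v \notin verts X -> stacked_sphere d (star d X sg v).

(* Stacked spheres are the complexes generated ([gen]) by stacked facet families: the
   boundary of a simplex followed by steps [fstar F s v], which trade a facet [s] for the
   cone [cone_boundary s v]. These families are closed pseudomanifolds (uniform, each
   ridge in exactly two facets, strongly connected).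

   Starring X gives Y, so one direction is immediate. Conversely write the family of Y as
   [fstar F s v] and also as [fstar G s' v'] with [G] stacked, and induct on [G]. If
   [v = v'], starring is injective and [F = G]. If [v] is off [s'], the facets of [G]
   through [v] are exactly [cone_boundary s v], so the two starrings commute: collapsing
   that cone back to [s] in [G] yields a stacked family by induction, and [F] is obtained
   from it by starring [v'] into [s']; when [s = s'], [G] is the boundary of the simplex
   on [s] plus [v], and [F] that of [s] plus [v']. Finally [v \in s'] is only possible in
   dimension 1, where [F] is [G] with [v] renamed [v']. *)

From mathcomp Require Import all_boot finmap zify.
Set Implicit Arguments. Unset Strict Implicit. Unset Printing Implicit Defensive.
Local Open Scope fset_scope.

Section FsetCard.

Variable K : choiceType.
Implicit Types (A B r f g : {fset K}) (a b c x : K).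

Lemma fsubset_card_eq A B : A `<=` B -> (#|` B| <= #|` A|)%N -> A = B.
Proof. by move=> AB BA; apply/eqP; rewrite eqEfcard AB BA. Qed.

Lemma cardfsD1_mem A a : a \in A -> #|` A `\ a| = (#|` A| - 1)%N.
Proof. by move=> aA; rewrite (cardfsD1 a A) aA /=; lia. Qed.

Lemma fsubset_cardS r f : r `<=` f -> #|` r|.+1 = #|` f| -> exists2 b, b \in f & r = f `\ b.
Proof.
move=> rf hc.
have : #|` f `\` r| == 1 by rewrite cardfsDS //; apply/eqP; lia.
case/cardfs1P=> b hb.
have : b \in f `\` r by rewrite hb inE.
rewrite inE => /andP[br bf]; exists b => //.
apply: fsubset_card_eq; last by rewrite cardfsD1_mem //; lia.
apply/fsubsetP=> x xr; rewrite !inE (fsubsetP rf _ xr) andbT.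
by apply: contraNneq br => <-.
Qed.

Lemma cardfs2_pair A a b : #|` A| = 2 -> a \in A -> b \in A -> a != b -> A = [fset a; b].
Proof.
move=> hA aA bA ab; apply/esym/fsubset_card_eq; last by rewrite hA cardfs2 ab.
by apply/fsubsetP=> x; rewrite !inE => /orP[]/eqP->.
Qed.

Lemma cardfs2_mem A a b c : #|` A| = 2 -> a \in A -> b \in A -> c \in A -> a != b ->
  c = a \/ c = b.
Proof.
move=> hA aA bA + ab; rewrite (cardfs2_pair hA aA bA ab) !inE.
by case/orP=> /eqP ->; [left | right].
Qed.

Lemma cardfsI_neq f g n : #|` f| = n -> #|` g| = n -> f != g -> (#|` f `&` g| < n)%N.
Proof.
move=> hf hg; apply: contraR; rewrite -leqNgt => hI.
have e : f `&` g = f by apply: fsubset_card_eq; [exact: fsubsetIl | lia].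
by apply/eqP/fsubset_card_eq; [rewrite -e fsubsetIr | lia].
Qed.

Lemma cardfsI_ridge d f g : #|` f| = d.+1 -> #|` g| = d.+1 -> f != g ->
  (d <= #|` f `&` g|)%N -> exists2 a, a \in g & f `&` g = g `\ a.
Proof.
move=> hf hg fg hI; apply: fsubset_cardS; first exact: fsubsetIr.
by have := cardfsI_neq hf hg fg; lia.
Qed.

Lemma exists_other_mem A x : (2 <= #|` A|)%N -> exists2 b, b \in A & b != x.
Proof.
move=> h; case: (fset_0Vmem (A `\ x)) => [e|[b]].
  by move: h; rewrite (cardfsD1 x A) e cardfs0; case: (x \in A).
by rewrite !inE => /andP[bx bA]; exists b.
Qed.

End FsetCard.

Definition boundary (A : {fset nat}) : cplx := [fset A `\ a | a in A].

Definition cone_boundary (s : {fset nat}) (v : nat) : cplx :=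
  [fset s `\ a `|` [fset v] | a in s].

Definition fstar (F : cplx) (s : {fset nat}) (v : nat) : cplx :=
  (F `\ s) `|` cone_boundary s v.

Definition unstar (G : cplx) (w : {fset nat}) (v : nat) : cplx :=
  (G `\` cone_boundary w v) `|` [fset w].

Lemma boundaryP (A t : {fset nat}) :
  reflect (exists2 a, a \in A & t = A `\ a) (t \in boundary A).
Proof. by apply: (iffP (imfsetP _ _ _ _)) => -[a aA ->]; exists a. Qed.

Lemma mem_boundary (A : {fset nat}) a : a \in A -> A `\ a \in boundary A.
Proof. by move=> aA; apply/boundaryP; exists a. Qed.

Lemma cone_boundaryP (s t : {fset nat}) v :
  reflect (exists2 a, a \in s & t = s `\ a `|` [fset v]) (t \in cone_boundary s v).
Proof. by apply: (iffP (imfsetP _ _ _ _)) => -[a aS ->]; exists a. Qed.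

Lemma mem_cone_boundary (s : {fset nat}) v a : a \in s -> s `\ a `|` [fset v] \in cone_boundary s v.
Proof. by move=> aS; apply/cone_boundaryP; exists a. Qed.

Lemma apex_cone_facet (s : {fset nat}) a v : v \in s `\ a `|` [fset v].
Proof. by rewrite !inE eqxx orbT. Qed.

Lemma cone_boundary_apex (s t : {fset nat}) v : t \in cone_boundary s v -> v \in t.
Proof. by case/cone_boundaryP=> a _ ->; apply: apex_cone_facet. Qed.

Lemma card_cone_facet (s : {fset nat}) a v : a \in s -> v \notin s ->
  #|` s `\ a `|` [fset v]| = #|` s|.
Proof.
move=> aS vs; rewrite fsetUC cardfsU1 inE negb_and vs orbT cardfsD1_mem //.
by have := cardfsD1 a s; rewrite aS /=; lia.
Qed.

Lemma cone_facet_inj (s : {fset nat}) a b v : a \in s -> v \notin s ->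
  s `\ a `|` [fset v] = s `\ b `|` [fset v] -> a = b.
Proof.
move=> aS vs e; apply/eqP; apply: contraTT isT => ab.
have : a \in s `\ b `|` [fset v] by rewrite !inE aS ab.
by rewrite -e !inE eqxx /= => /eqP ea; rewrite -ea aS in vs.
Qed.

Lemma cone_facetD_apex (s : {fset nat}) a v : v \notin s ->
  (s `\ a `|` [fset v]) `\ v = s `\ a.
Proof.
move=> vs; apply/fsetP=> x; rewrite !inE.
by case: (x =P v) => [->|]; rewrite ?(negbTE vs) ?andbF ?orbF.
Qed.

Lemma cone_facet_ridge (s r : {fset nat}) a v : v \notin s -> a \in s ->
  r `<=` s `\ a `|` [fset v] -> v \notin r -> #|` r|.+1 = #|` s| -> r = s `\ a.
Proof.
move=> vs aS rt vr hc; apply: fsubset_card_eq; last by rewrite cardfsD1_mem //; lia.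
apply/fsubsetP=> x xr; move: (fsubsetP rt _ xr); rewrite !inE.
by case/orP=> [->//|/eqP xv]; rewrite -xv xr in vr.
Qed.

Lemma fstarE (F : cplx) s v t :
  (t \in fstar F s v) = ((t != s) && (t \in F)) || (t \in cone_boundary s v).
Proof. by rewrite !inE. Qed.

Lemma mem_fstar_cone (F : cplx) s v a : a \in s -> s `\ a `|` [fset v] \in fstar F s v.
Proof. by move=> aS; rewrite fstarE mem_cone_boundary ?orbT. Qed.

Lemma unstarE (G : cplx) w v t :
  (t \in unstar G w v) = ((t \notin cone_boundary w v) && (t \in G)) || (t == w).
Proof. by rewrite !inE. Qed.

Lemma cone_boundary_off_apex (s t : {fset nat}) u x : t \in cone_boundary s u ->
  x \in t -> x != u -> x \in s.
Proof.
by case/cone_boundaryP=> a _ ->; rewrite !inE => /orP[/andP[_ ->]|->].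
Qed.

Lemma notin_cone_boundary (w t : {fset nat}) u x : x \notin w -> x != u -> x \in t ->
  t \notin cone_boundary w u.
Proof. by move=> xw xu xt; apply: contra xw => tC; apply: cone_boundary_off_apex tC xt xu. Qed.

Lemma cone_facet_over_ridge (w g : {fset nat}) a v : v \notin w -> a \in w ->
  g \in cone_boundary w v -> w `\ a `<=` g -> g = w `\ a `|` [fset v].
Proof.
move=> vw aw /cone_boundaryP[b bw ->] sub; case: (a =P b) => [->//|/eqP ab].
have : b \in w `\ a by rewrite !inE bw eq_sym ab.
move/(fsubsetP sub); rewrite !inE eqxx /= => /eqP bv.
by rewrite -bv bw in vw.
Qed.

Lemma cone_boundary_pair (a b u : nat) t : a != b ->
  (t \in cone_boundary [fset a; b] u) = (t == [fset b; u]) || (t == [fset a; u]).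
Proof.
move=> ab; have [ea eb] : [fset a; b] `\ a = [fset b] /\ [fset a; b] `\ b = [fset a].
  by rewrite fsetU1K ?(fsetUC [fset a]) ?fsetU1K // inE // eq_sym.
apply/cone_boundaryP/idP.
- by case=> c; rewrite !inE => /orP[]/eqP -> ->; rewrite ?ea ?eb eqxx ?orbT.
- case/orP=> /eqP ->; [exists a | exists b]; rewrite ?ea ?eb //; by rewrite !inE eqxx ?orbT.
Qed.

Lemma cone_boundary_fsubset (s s' : {fset nat}) v : v \notin s -> (2 <= #|` s|)%N ->
  cone_boundary s v `<=` cone_boundary s' v -> s `<=` s'.
Proof.
move=> vs hs sub; apply/fsubsetP=> x xs.
have [b bs bx] := exists_other_mem x hs.
have /cone_boundaryP[c _ ec] := fsubsetP sub _ (mem_cone_boundary v bs).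
have : x \in s `\ b `|` [fset v] by rewrite !inE xs eq_sym bx.
rewrite ec !inE => /orP[/andP[_ //]|/eqP xv]; by rewrite -xv xs in vs.
Qed.

Definition uniform d (F : cplx) := forall f, f \in F -> #|` f| = d.+1.

Definition fresh (F : cplx) v := forall f, f \in F -> v \notin f.

Lemma fresh_notin (F : cplx) v (t : {fset nat}) : fresh F v -> v \in t -> t \notin F.
Proof. by move=> vF; apply: contraL; exact: vF. Qed.

Definition ridges_shared d (F : cplx) := forall f r, f \in F -> r `<=` f -> #|` r| = d ->
  exists2 g, g \in F & (g != f) && (r `<=` g).

Definition ridges_at_most_two d (F : cplx) := forall f g h r, f \in F -> g \in F -> h \in F ->
  r `<=` f -> r `<=` g -> r `<=` h -> #|` r| = d -> f != g -> (h == f) || (h == g).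

Definition adjacency_closed d (F K : cplx) := forall f g, f \in K -> g \in F ->
  (d <= #|` f `&` g|)%N -> g \in K.

Definition strongly_connected d (F : cplx) :=
  forall K, K `<=` F -> K != fset0 -> adjacency_closed d F K -> K = F.

Definition pseudomanifold_family d (F : cplx) :=
  [/\ uniform d F, ridges_shared d F, ridges_at_most_two d F & strongly_connected d F].

Lemma ridges_shared_sub_eq d (F K : cplx) : uniform d F -> ridges_at_most_two d F ->
  strongly_connected d F -> K `<=` F -> K != fset0 -> ridges_shared d K -> K = F.
Proof.
move=> uF pF cF KF Kn sK; apply: cF => // f g fK gF hI.
have fF := fsubsetP KF _ fK; case: (f =P g) => [<-//|/eqP fg].
have [b bg eb] := cardfsI_ridge (uF f fF) (uF g gF) fg hI.
have hr : #|` f `&` g| = d by rewrite eb cardfsD1_mem // uF //; lia.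
have [f' f'K /andP[f'f rf']] := sK f _ fK (fsubsetIl f g) hr.
have := pF f f' g _ fF (fsubsetP KF _ f'K) gF (fsubsetIl _ _) rf' (fsubsetIr _ _) hr.
by rewrite eq_sym f'f => /(_ isT) /orP[] /eqP ->.
Qed.

Lemma boundary_pseudomanifold d (A : {fset nat}) : (1 <= d)%N -> #|` A| = d.+2 ->
  pseudomanifold_family d (boundary A).
Proof.
move=> d_gt0 hA.
have notin_ridge e r : e \in A -> r `<=` A `\ e -> e \in A `\` r.
  by move=> eA re; rewrite !inE eA andbT; apply/negP=> /(fsubsetP re); rewrite !inE eqxx.
have co_ridge r a : r `<=` A `\ a -> #|` r| = d -> #|` A `\` r| = 2.
  by move=> ra hr; rewrite cardfsDS ?hA ?hr; [lia | exact: fsubset_trans ra (fsubsetDl _ _)].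
split.
- by move=> f /boundaryP[a aA ->]; rewrite cardfsD1_mem // hA.
- move=> f r /boundaryP[a aA ->] ra hr.
  have /cardfs1P[b eb] : #|` (A `\` r) `\ a| == 1.
    by rewrite cardfsD1_mem ?notin_ridge // (co_ridge r a).
  have : b \in (A `\` r) `\ a by rewrite eb inE.
  rewrite !inE => /andP[ba /andP[br bA]].
  exists (A `\ b); first exact: mem_boundary.
  apply/andP; split.
    apply/eqP=> e; have : a \in A `\ b by rewrite !inE aA eq_sym ba.
    by rewrite e !inE eqxx.
  apply/fsubsetP=> x xr; rewrite !inE (fsubsetP (fsubset_trans ra (fsubsetDl _ _)) _ xr) andbT.
  by apply: contraNneq br => <-.
- move=> f g h r /boundaryP[a aA ->] /boundaryP[b bA ->] /boundaryP[c cA ->] ra rb rc hr fg.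
  have ab : a != b by apply: contraNneq fg => ->.
  have := cardfs2_mem (co_ridge r a ra hr) (notin_ridge a r aA ra) (notin_ridge b r bA rb).
  by case/(_ c (notin_ridge c r cA rc) ab) => ->; rewrite eqxx ?orbT.
- move=> K KA Kn clK; apply/eqP; rewrite eqEfsubset KA /=.
  have [k kK] := fset0Pn _ Kn.
  move: (fsubsetP KA _ kK) => /boundaryP[a aA ek].
  apply/fsubsetP=> g gA; move: (gA) => /boundaryP[b bA eg].
  case: (a =P b) => [ab|/eqP ab]; first by rewrite eg -ab -ek.
  apply: (clK k) => //.
  have sub : (A `\ a) `\ b `<=` k `&` g.
    apply/fsubsetP=> x; rewrite ek eg !inE.
    by case/andP=> xb /andP[xa xA]; rewrite xa xb xA.
  apply: leq_trans (fsubset_leq_card sub).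
  have bA' : b \in A `\ a by rewrite !inE bA eq_sym ab.
  by rewrite cardfsD1_mem // cardfsD1_mem // hA; lia.
Qed.

Section FstarInvariants.

Variables (d : nat) (F : cplx) (s : {fset nat}) (v : nat).
Hypotheses (uF : uniform d F) (sF : s \in F) (vF : fresh F v).

Let vs : v \notin s := vF sF.
Let hs : #|` s| = d.+1 := uF sF.

Lemma uniform_fstar : uniform d (fstar F s v).
Proof.
move=> t; rewrite fstarE => /orP[/andP[_ /uF] //|/cone_boundaryP[a aS ->]].
by rewrite card_cone_facet.
Qed.

Lemma ridges_shared_fstar : ridges_shared d F -> ridges_shared d (fstar F s v).
Proof.
move=> sharedF f r; rewrite fstarE => /orP[/andP[fs fF]|/cone_boundaryP[a aS ->]] rf hr.
- have [g gF /andP[gf rg]] := sharedF f r fF rf hr.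
  case: (g =P s) => [gs|/eqP gs]; last by exists g; rewrite ?fstarE ?gs ?gF ?gf.
  subst g; have [a aS ra] : exists2 a, a \in s & r = s `\ a.
    by apply: fsubset_cardS rg _; rewrite hr hs.
  exists (s `\ a `|` [fset v]); first exact: mem_fstar_cone.
  rewrite ra fsubsetUl andbT; apply: contraTneq (vF fF) => <-.
  by rewrite negbK apex_cone_facet.
- have hc : #|` r|.+1 = #|` s `\ a `|` [fset v]| by rewrite card_cone_facet // hr hs.
  have [b bf rb] := fsubset_cardS rf hc.
  case: (b =P v) => [bv|/eqP bv].
  + subst b; rewrite cone_facetD_apex // in rb; subst r.
    have [g gF /andP[gs rg]] := sharedF s (s `\ a) sF (fsubsetDl _ _) hr.
    exists g; first by rewrite fstarE gs gF.
    rewrite rg andbT; apply: contraTneq (vF gF) => ->.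
    by rewrite negbK apex_cone_facet.
  + move: (bf); rewrite !inE (negbTE bv) orbF => /andP[ba bS].
    exists (s `\ b `|` [fset v]); first exact: mem_fstar_cone.
    apply/andP; split.
      by apply: contra_neq ba => /cone_facet_inj -> //.
    rewrite rb; apply/fsubsetP=> x; rewrite !inE.
    by case/andP=> xb /orP[/andP[_ ->]|->]; rewrite ?xb ?orbT.
Qed.

Lemma cone_facet_ridge_apex (r : {fset nat}) e : e \in s -> v \in r ->
  r `<=` s `\ e `|` [fset v] -> e \in s `\` (r `\ v).
Proof.
move=> eS vr re; rewrite !inE eS andbT; apply/negP => /andP[ev er].
by move: (fsubsetP re _ er); rewrite !inE eqxx /= (negbTE ev).
Qed.

Lemma cone_ridges_at_most_two : (1 <= d)%N -> ridges_at_most_two d (cone_boundary s v).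
Proof.
move=> d_gt0 f g h r /cone_boundaryP[a aS ->] /cone_boundaryP[b bS ->] /cone_boundaryP[c cS ->].
move=> ra rb rc hr fg; have ab : a != b by apply: contraNneq fg => ->.
have hc : #|` r|.+1 = #|` s| by rewrite hr hs.
have [vr | vr] := boolP (v \in r); last first.
  by move: fg; rewrite -(cone_facet_ridge vs aS ra vr hc) -(cone_facet_ridge vs bS rb vr hc) eqxx.
have rs : r `\ v `<=` s.
  apply/fsubsetP=> x; rewrite !inE => /andP[xv xr].
  by move: (fsubsetP ra _ xr); rewrite !inE (negbTE xv) orbF => /andP[].
have two : #|` s `\` (r `\ v)| = 2 by rewrite cardfsDS // cardfsD1_mem // hs hr; lia.
have := cardfs2_mem two (cone_facet_ridge_apex aS vr ra) (cone_facet_ridge_apex bS vr rb).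
by case/(_ _ (cone_facet_ridge_apex cS vr rc) ab) => ->; rewrite eqxx ?orbT.
Qed.

Lemma cone_ridge_off_apex (t r : {fset nat}) : t \in cone_boundary s v -> r `<=` t ->
  v \notin r -> #|` r| = d -> r `<=` s /\ t = r `|` [fset v].
Proof.
move=> /cone_boundaryP[a aS ->] rt vr hr.
by rewrite (cone_facet_ridge vs aS rt vr) ?fsubsetDl // hr hs.
Qed.

Lemma ridges_at_most_two_fstar : (1 <= d)%N -> ridges_at_most_two d F ->
  ridges_at_most_two d (fstar F s v).
Proof.
move=> d_gt0 pF f g h r fH gH hH rf rg rh hr fg.
have [vr|vr] := boolP (v \in r).
  have inC t : t \in fstar F s v -> r `<=` t -> t \in cone_boundary s v.
    rewrite fstarE => /orP[/andP[_ tF] rt|//].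
    by move: (vF tF); rewrite (fsubsetP rt _ vr).
  exact: (cone_ridges_at_most_two d_gt0 (inC f fH rf) (inC g gH rg) (inC h hH rh)
    rf rg rh hr fg).
(* Replacing each new facet through [r] by [s] reduces the claim to [F]. *)
pose lower t := if t \in cone_boundary s v then s else t.
have lowerF t : t \in fstar F s v -> r `<=` t -> (lower t \in F) && (r `<=` lower t).
  rewrite /lower fstarE; case: ifP => [tC _ rt|_]; last by rewrite orbF => /andP[_ ->].
  by rewrite sF; case: (cone_ridge_off_apex tC rt vr hr).
have lower_inj t1 t2 : t1 \in fstar F s v -> t2 \in fstar F s v -> r `<=` t1 -> r `<=` t2 ->
    lower t1 = lower t2 -> t1 = t2.
  rewrite /lower !fstarE; case: ifP => t1C; case: ifP => t2C //= H1 H2 r1 r2.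
  - by rewrite (cone_ridge_off_apex t1C r1 vr hr).2 (cone_ridge_off_apex t2C r2 vr hr).2.
  - by move: H2; rewrite orbF => /andP[/negbTE t2s _] ss; rewrite ss eqxx in t2s.
  - by move: H1; rewrite orbF => /andP[/negbTE t1s _] ss; rewrite ss eqxx in t1s.
have /andP[fF rf'] := lowerF f fH rf; have /andP[gF rg'] := lowerF g gH rg.
have /andP[hF rh'] := lowerF h hH rh.
have fg' : lower f != lower g.
  by apply/eqP=> /(lower_inj _ _ fH gH rf rg) e; rewrite e eqxx in fg.
case/orP: (pF _ _ _ r fF gF hF rf' rg' rh' hr fg') => /eqP e.
  by rewrite (lower_inj _ _ hH fH rh rf e) eqxx.
by rewrite (lower_inj _ _ hH gH rh rg e) eqxx orbT.
Qed.

Lemma cone_facets_adjacent a b : a \in s -> b \in s ->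
  (d <= #|` (s `\ a `|` [fset v]) `&` (s `\ b `|` [fset v])|)%N.
Proof.
move=> aS bS; case: (a =P b) => [<-|/eqP ab].
  by rewrite fsetIid card_cone_facet // hs.
have sub : (s `\ a `|` [fset v]) `\ b `<=` (s `\ a `|` [fset v]) `&` (s `\ b `|` [fset v]).
  by apply/fsubsetP=> x; rewrite !inE => /andP[-> /orP[/andP[-> ->]|->]]; rewrite ?orbT.
apply: leq_trans (fsubset_leq_card sub).
have bt : b \in s `\ a `|` [fset v] by rewrite !inE bS eq_sym ab.
by rewrite cardfsD1_mem // card_cone_facet // hs; lia.
Qed.

Lemma adjacent_cone_facet (g : {fset nat}) : #|` g| = d.+1 -> g != s -> (d <= #|` g `&` s|)%N ->
  exists2 a, a \in s & (d <= #|` g `&` (s `\ a `|` [fset v])|)%N.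
Proof.
move=> hg gs hI; have [a aS ea] := cardfsI_ridge hg hs gs hI.
exists a => //; apply: leq_trans hI (fsubset_leq_card _).
apply/fsubsetP=> x xgs; move: (xgs); rewrite ea => xa.
by rewrite inE (fsubsetP (fsubsetIl _ _) _ xgs) inE xa.
Qed.

Lemma cone_boundary_sub_closed (K : cplx) : adjacency_closed d (fstar F s v) K ->
  K `&` cone_boundary s v != fset0 -> cone_boundary s v `<=` K.
Proof.
move=> clK /fset0Pn[t]; rewrite inE => /andP[tK /cone_boundaryP[a aS et]].
apply/fsubsetP=> u /cone_boundaryP[b bS eu].
by apply: (clK t); rewrite ?eu ?mem_fstar_cone // et cone_facets_adjacent.
Qed.

Lemma strongly_connected_fstar : strongly_connected d F -> strongly_connected d (fstar F s v).
Proof.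
move=> cF K KH Kn clK.
have sH : s \notin fstar F s v.
  by rewrite fstarE eqxx /=; apply/negP=> /cone_boundary_apex; rewrite (negbTE vs).
have Ks x : x \in K -> x != s.
  by move=> xK; apply/eqP=> xs; move: sH; rewrite -{1}xs (fsubsetP KH _ xK).
pose met := K `&` cone_boundary s v != fset0.
have KC t : t \in K -> t \in cone_boundary s v -> met.
  by move=> tK tC; apply/fset0Pn; exists t; rewrite inE tK.
(* Pull [K] back to [F], letting [s] stand for the new facets. *)
pose K0 := [fset x in F | (x \in K) || ((x == s) && met)].
have K0E x : (x \in K0) = (x \in F) && ((x \in K) || ((x == s) && met)) by rewrite !inE.
have sK0 : met -> s \in K0 by move=> m; rewrite K0E sF eqxx m orbT.
have e0 : K0 = F.
  apply: cF.
  - by apply/fsubsetP=> x; rewrite K0E => /andP[].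
  - have [k kK] := fset0Pn _ Kn; apply/fset0Pn.
    move: (fsubsetP KH _ kK); rewrite fstarE => /orP[/andP[_ kF]|kC].
      by exists k; rewrite K0E kF kK.
    by exists s; apply: sK0; exact: KC kK kC.
  - move=> f g; rewrite K0E => /andP[fF /orP[fK|/andP[/eqP -> m]]] gF hI.
    + case: (g =P s) => [gs|/eqP gs]; last by rewrite K0E gF (clK f g) // fstarE gs gF.
      subst g; have [a aS adj] := adjacent_cone_facet (uF fF) (Ks f fK) hI.
      by apply/sK0/(KC _ (clK f _ fK (mem_fstar_cone _ _ aS) adj)); apply: mem_cone_boundary.
    + case: (g =P s) => [->|/eqP gs]; first exact: sK0.
      have [a aS adj] : exists2 a, a \in s & (d <= #|` g `&` (s `\ a `|` [fset v])|)%N.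
        by apply: adjacent_cone_facet (uF gF) gs _; rewrite fsetIC.
      have tK := fsubsetP (cone_boundary_sub_closed clK m) _ (mem_cone_boundary v aS).
      by rewrite K0E gF (clK _ g tK) ?fstarE ?gs ?gF // fsetIC.
apply/fsetP=> x; apply/idP/idP; first exact: fsubsetP KH x.
rewrite fstarE => /orP[/andP[xs xF]|xC].
- by move: xF; rewrite -e0 K0E (negbTE xs) /= orbF => /andP[].
- move: (sF); rewrite -e0 K0E => /andP[_ /orP[sK|/andP[_ m]]].
    by rewrite (fsubsetP KH _ sK) in sH.
  exact: fsubsetP (cone_boundary_sub_closed clK m) x xC.
Qed.

End FstarInvariants.

Inductive stacked_family (d : nat) : cplx -> Prop :=
| stacked_boundary A : #|` A| = d.+2 -> stacked_family d (boundary A)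
| stacked_fstar G s v : stacked_family d G -> s \in G -> fresh G v ->
    stacked_family d (fstar G s v).

Lemma stacked_family_pseudomanifold d G : (1 <= d)%N -> stacked_family d G ->
  pseudomanifold_family d G.
Proof.
move=> d_gt0; elim=> [A hA|G' s v _ [uG sharedG pG cG] sG vG].
  exact: boundary_pseudomanifold.
split; [exact: uniform_fstar | exact: ridges_shared_fstar
       | exact: ridges_at_most_two_fstar | exact: strongly_connected_fstar].
Qed.

Lemma boundary_cone (w : {fset nat}) u : u \notin w ->
  boundary (w `|` [fset u]) = [fset w] `|` cone_boundary w u.
Proof.
move=> uw; have wU a : a \in w -> (w `|` [fset u]) `\ a = w `\ a `|` [fset u].
  move=> aw; apply/fsetP=> x; rewrite !inE.
  by case: (x =P u) => [->|_]; rewrite ?orbF ?orbT // andbT; apply: contraNneq uw => ->.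
have wUu : (w `|` [fset u]) `\ u = w by rewrite fsetUC fsetU1K.
apply/fsetP=> t; apply/boundaryP/idP.
- case=> a; rewrite in_fsetU in_fset1 => /orP[aw ->|/eqP -> ->].
    by rewrite wU // in_fsetU mem_cone_boundary ?orbT.
  by rewrite wUu in_fsetU in_fset1 eqxx.
- rewrite in_fsetU in_fset1 => /orP[/eqP ->|/cone_boundaryP[a aw ->]].
    by exists u; rewrite ?wUu // !inE eqxx orbT.
  by exists a; rewrite ?wU // in_fsetU aw.
Qed.

Lemma pseudomanifold_cone_boundary d (G : cplx) (w : {fset nat}) v :
  pseudomanifold_family d G -> (1 <= d)%N -> v \notin w -> #|` w| = d.+1 -> w \in G ->
  cone_boundary w v `<=` G -> G = boundary (w `|` [fset v]).
Proof.
move=> [uG _ pG cG] d_gt0 vw hw wG CG.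
have [_ sharedB _ _] : pseudomanifold_family d (boundary (w `|` [fset v])).
  by apply: boundary_pseudomanifold; rewrite // fsetUC cardfsU1 vw hw.
apply/esym/(ridges_shared_sub_eq uG pG cG _ _ sharedB); rewrite boundary_cone //.
  by rewrite fsubUset fsub1set wG.
by apply/fset0Pn; exists w; rewrite !inE eqxx.
Qed.

Lemma fstar_fresh (F : cplx) s v (x : {fset nat}) : v \notin x ->
  (x \in fstar F s v) = (x != s) && (x \in F).
Proof.
move=> vx; rewrite fstarE orbC; case: (boolP (_ \in _)) => // /cone_boundary_apex.
by rewrite (negbTE vx).
Qed.

Lemma fstar_apex (F : cplx) s v (x : {fset nat}) : fresh F v -> v \in x ->
  (x \in fstar F s v) = (x \in cone_boundary s v).
Proof.
move=> vF vx; rewrite fstarE; case: (boolP (x \in F)) => [/vF|]; last by rewrite andbF.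
by rewrite vx.
Qed.

Lemma unstar_fstar (F : cplx) s v : s \in F -> fresh F v -> unstar (fstar F s v) s v = F.
Proof.
move=> sF vF; apply/fsetP=> x; rewrite unstarE fstarE.
have [xC|xC] := boolP (x \in cone_boundary s v); last first.
  by rewrite orbF /=; case: (x =P s) => [->|]; rewrite ?sF ?orbF ?orbT.
have xF := fresh_notin vF (cone_boundary_apex xC).
by rewrite (negbTE xF); apply: contraNF xF => /eqP ->.
Qed.

Lemma fstar_unstar (G : cplx) (w : {fset nat}) v : w \notin G -> cone_boundary w v `<=` G ->
  fstar (unstar G w v) w v = G.
Proof.
move=> wG CG; apply/fsetP=> x; rewrite fstarE unstarE.
case: (boolP (x \in cone_boundary w v)) => [xC|_]; first by rewrite orbT (fsubsetP CG).
by rewrite orbF /=; case: (x =P w) => [->|_]; rewrite ?(negbTE wG) ?orbF.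
Qed.

Definition destar_stacked d (G : cplx) := forall (F : cplx) s v,
  uniform d F -> s \in F -> fresh F v -> (exists2 g, g \in F & g != s) ->
  fstar F s v = G -> stacked_family d F.

Definition swap_apex (G : cplx) (w : {fset nat}) v v' : cplx :=
  (G `\` cone_boundary w v) `|` cone_boundary w v'.

Section Unstar.

Variables (d : nat) (G : cplx) (w : {fset nat}) (v : nat).
Hypotheses (d_gt0 : (1 <= d)%N) (stG : stacked_family d G) (IH : destar_stacked d G).
Hypotheses (vw : v \notin w) (hw : #|` w| = d.+1) (CG : cone_boundary w v `<=` G).
Hypothesis (apexG : forall x, x \in G -> v \in x -> x \in cone_boundary w v).

Lemma stacked_unstar : w \notin G -> stacked_family d (unstar G w v).
Proof.
move=> wG; have [uG sharedG _ _] := stacked_family_pseudomanifold d_gt0 stG.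
apply: (@IH (unstar G w v) w v) => [x|||| ]; rewrite ?unstarE ?eqxx ?orbT //.
- by case/orP=> [/andP[_ /uG] //|/eqP ->].
- move=> x; rewrite unstarE => /orP[/andP[xC xG]|/eqP -> //].
  by apply: contra xC; exact: apexG.
- have [a aw _] : exists2 a, a \in w & a != v by apply: exists_other_mem; rewrite hw; lia.
  have hr : #|` w `\ a| = d by rewrite cardfsD1_mem // hw; lia.
  have tG := fsubsetP CG _ (mem_cone_boundary v aw).
  have [g gG /andP[gt rg]] := sharedG _ (w `\ a) tG (fsubsetUl _ _) hr.
  exists g; last by apply: contraNneq wG => <-.
  rewrite unstarE gG andbT; apply/orP; left; apply: contra gt => gC.
  by rewrite (cone_facet_over_ridge vw aw gC rg).
- exact: fstar_unstar.
Qed.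

Lemma stacked_swap_apex v' : fresh G v' -> v' \notin w ->
  stacked_family d (swap_apex G w v v').
Proof.
move=> v'G v'w; have [wG|wG] := boolP (w \in G).
  have pmG := stacked_family_pseudomanifold d_gt0 stG.
  have eG := pseudomanifold_cone_boundary pmG d_gt0 vw hw wG CG.
  have -> : swap_apex G w v v' = boundary (w `|` [fset v']).
    rewrite boundary_cone // /swap_apex eG boundary_cone //; congr (_ `|` _).
    apply/fsetP=> x; rewrite !inE.
    case: (boolP (x \in cone_boundary w v)) => [xC|_]; last by rewrite orbF.
    by apply/esym/negP=> /eqP xw; move: (cone_boundary_apex xC); rewrite xw (negbTE vw).
  by apply: stacked_boundary; rewrite fsetUC cardfsU1 v'w hw.
have -> : swap_apex G w v v' = fstar (unstar G w v) w v'.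
  apply/fsetP=> x; rewrite fstarE unstarE !inE.
  by case: (x =P w) => [->|]; rewrite ?(negbTE wG) ?andbF ?orbF.
apply: stacked_fstar; first exact: stacked_unstar.
  by rewrite unstarE eqxx orbT.
by move=> x; rewrite unstarE => /orP[/andP[_ /v'G]|/eqP ->].
Qed.

End Unstar.

Lemma fstar_inj d (F G : cplx) (s s' : {fset nat}) v : (1 <= d)%N -> uniform d F -> uniform d G ->
  s \in F -> s' \in G -> fresh F v -> fresh G v -> fstar F s v = fstar G s' v -> F = G.
Proof.
move=> d_gt0 uF uG sF s'G vF vG e.
have sub (F1 F2 : cplx) s1 s2 : fstar F1 s1 v = fstar F2 s2 v -> fresh F1 v -> fresh F2 v ->
    cone_boundary s1 v `<=` cone_boundary s2 v.
  move=> e12 v1 v2; apply/fsubsetP=> t tC.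
  by rewrite -(fstar_apex _ v2 (cone_boundary_apex tC)) -e12 fstarE tC orbT.
have ss : s = s'.
  apply/eqP; rewrite eqEfsubset (cone_boundary_fsubset (vF _ sF) _ (sub _ _ _ _ e vF vG)).
    by rewrite (cone_boundary_fsubset (vG _ s'G) _ (sub _ _ _ _ (esym e) vG vF)) // uG //; lia.
  by rewrite uF //; lia.
by rewrite -(unstar_fstar sF vF) e -ss unstar_fstar // ss.
Qed.

Section DestarStep.

Variables (d : nat) (G : cplx) (s' : {fset nat}) (v' : nat).
Variables (F : cplx) (s : {fset nat}) (v : nat).
Hypotheses (d_gt0 : (1 <= d)%N) (stG : stacked_family d G) (IH : destar_stacked d G).
Hypotheses (s'G : s' \in G) (v'G : fresh G v').
Hypotheses (uF : uniform d F) (sF : s \in F) (vF : fresh F v).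
Hypotheses (eY : fstar F s v = fstar G s' v') (vv' : v != v').

Let pmG := stacked_family_pseudomanifold d_gt0 stG.
Let uG : uniform d G. Proof. by case: pmG. Qed.
Let vs : v \notin s := vF sF.
Let v's' : v' \notin s' := v'G s'G.
Let two_s : (2 <= #|` s|)%N. Proof. by rewrite uF //; lia. Qed.
Let two_s' : (2 <= #|` s'|)%N. Proof. by rewrite uG //; lia. Qed.

Lemma memF_off_apex (t : {fset nat}) : v \notin t -> (t \in F) = (t == s) || (t \in fstar G s' v').
Proof. by move=> vt; rewrite -eY fstar_fresh //; case: (t =P s) => [->|]; rewrite ?sF. Qed.

Lemma mem_fstarG_apex (t : {fset nat}) : v \in t ->
  (t \in fstar G s' v') = (t \in cone_boundary s v).
Proof. by move=> vt; rewrite -eY fstar_apex. Qed.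

Lemma apex'_notin_facet : v \notin s' -> v' \notin s.
Proof.
move=> vs'; apply/negP=> v's.
have [a aS av'] := exists_other_mem v' two_s.
have tC : s `\ a `|` [fset v] \in cone_boundary s' v'.
  rewrite -(fstar_apex _ v'G) -?eY ?mem_fstar_cone //.
  by rewrite !inE v's eq_sym av'.
by move: (cone_boundary_off_apex tC (apex_cone_facet s a v) vv'); rewrite (negbTE vs').
Qed.

Lemma cone_sub_G : v \notin s' -> cone_boundary s v `<=` G.
Proof.
move=> vs'; apply/fsubsetP=> t tC; have tY : t \in fstar G s' v'.
  by rewrite -eY fstarE tC orbT.
move: tY; rewrite fstarE => /orP[/andP[_ //]|tC'].
have := cone_boundary_apex tC'; move: tC => /cone_boundaryP[a _ ->].
rewrite !inE (eq_sym v' v) (negbTE vv') orbF => /andP[_ v's].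
by move: (apex'_notin_facet vs'); rewrite v's.
Qed.

Lemma apex_facets_G (x : {fset nat}) : v \notin s' -> x \in G -> v \in x ->
  x \in cone_boundary s v.
Proof.
move=> vs' xG vx; rewrite -mem_fstarG_apex // fstarE xG andbT.
by apply/orP; left; apply: contraTneq vx => ->.
Qed.

Lemma destar_same_facet : v \notin s' -> s = s' -> stacked_family d F.
Proof.
move=> vs' ss'; have v's := apex'_notin_facet vs'.
suff -> : F = swap_apex G s v v'.
  apply: stacked_swap_apex => //; first exact: uF.
    exact: cone_sub_G.
  by move=> x; apply: apex_facets_G.
apply/fsetP=> t; rewrite !inE.
have [vt|vt] := boolP (v \in t).
  rewrite (negbTE (fresh_notin vF vt)) (negbTE (notin_cone_boundary vs vv' vt)) orbF.
  by case: (boolP (t \in G)) => [/(apex_facets_G vs') ->|]; rewrite ?andbF.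
rewrite memF_off_apex // fstarE -ss'.
have -> : t \notin cone_boundary s v by apply: contra vt => /cone_boundary_apex.
by case: (t =P s) => [->|_] //=; rewrite ss' s'G.
Qed.

Lemma destar_other_facet : v \notin s' -> s != s' -> stacked_family d F.
Proof.
move=> vs' ss'; have v's := apex'_notin_facet vs'.
have sG : s \notin G.
  apply: contraNN (_ : s \notin fstar F s v) => [sG|].
    by rewrite eY fstarE sG andbT ss'.
  by rewrite fstarE eqxx /=; apply: contra vs => /cone_boundary_apex.
suff -> : F = fstar (unstar G s v) s' v'.
  apply: stacked_fstar.
  - apply: stacked_unstar => //; first exact: uF.
      exact: cone_sub_G.
    by move=> x; apply: apex_facets_G.
  - by rewrite unstarE s'G andbT; apply/orP; left; apply: contra vs' => /cone_boundary_apex.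
  - by move=> x; rewrite unstarE => /orP[/andP[_ /v'G]|/eqP ->].
apply/fsetP=> t; rewrite fstarE unstarE.
have [vt|vt] := boolP (v \in t).
  rewrite (negbTE (fresh_notin vF vt)) (negbTE (notin_cone_boundary vs' vv' vt)) orbF.
  have -> : (t == s) = false by apply: contraNF vs => /eqP <-.
  by case: (boolP (t \in G)) => [/(apex_facets_G vs') ->|_]; rewrite ?andbF.
rewrite memF_off_apex // fstarE.
have -> : t \notin cone_boundary s v by apply: contra vt => /cone_boundary_apex.
by case: (t =P s) => [->|_]; rewrite ?ss' ?orbT //= orbF.
Qed.

Lemma apex'_in_facet : v \in s' -> v' \in s.
Proof.
move=> vs'; have [c cs' cv] := exists_other_mem v two_s'.
have tC : s' `\ c `|` [fset v'] \in cone_boundary s v.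
  by rewrite -mem_fstarG_apex ?mem_fstar_cone // !inE vs' eq_sym cv.
by apply: (cone_boundary_off_apex tC (apex_cone_facet _ _ _)); rewrite eq_sym.
Qed.

Lemma link_facet_G : v \in s' ->
  s `\ v' `|` [fset v] \in G /\ s `\ v' `|` [fset v] != s'.
Proof.
move=> vs'; have t_notin : v' \notin s `\ v' `|` [fset v] by rewrite !inE eqxx /= eq_sym.
have := mem_fstar_cone F v (apex'_in_facet vs').
by rewrite eY fstar_fresh // => /andP[-> ->].
Qed.

Lemma apex_facets_in_facet (x : {fset nat}) : v \in s' -> x \in G -> v \in x ->
  x = s' \/ x = s `\ v' `|` [fset v].
Proof.
move=> vs' xG vx; case: (x =P s') => [|/eqP xs']; [by left | right].
have /cone_boundaryP[a aS ex] : x \in cone_boundary s v.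
  by rewrite -mem_fstarG_apex // fstarE xs' xG.
case: (a =P v') => [<- //|/eqP av'].
by have := v'G xG; rewrite ex !inE (apex'_in_facet vs') eq_sym av'.
Qed.

(* Both facets of [G] through [v] share every ridge through [v], which forces [d = 1]. *)
Lemma apex_in_facet_dim1 : v \in s' -> d = 1.
Proof.
move=> vs'; have [f1G f1s'] := link_facet_G vs'.
move: f1G f1s'; set f1 := s `\ v' `|` [fset v] => f1G f1s'.
have [_ sharedG _ _] := pmG; have hf1 : #|` f1| = d.+1 := uG f1G.
apply/eqP; rewrite eqn_leq d_gt0 andbT leqNgt; apply: contra f1s' => d_gt1.
have ridge_sub b : b \in f1 -> b != v -> f1 `\ b `<=` s'.
  move=> bf bv; have hr : #|` f1 `\ b| = d by rewrite cardfsD1_mem // hf1; lia.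
  have [g gG /andP[gf rg]] := sharedG _ _ f1G (fsubsetDl _ _) hr.
  have vg : v \in g by apply: (fsubsetP rg); rewrite in_fsetD1 eq_sym bv /f1 apex_cone_facet.
  by case: (apex_facets_in_facet vs' gG vg) => e; [rewrite -e | rewrite e eqxx in gf].
apply/eqP/fsubset_card_eq; last by rewrite hf1 uG.
apply/fsubsetP=> x xf.
have [b /fsetD1P[bv bf] bx] : exists2 b, b \in f1 `\ v & b != x.
  by apply: exists_other_mem; rewrite cardfsD1_mem ?hf1; [lia | exact: apex_cone_facet].
by apply: (fsubsetP (ridge_sub b bf bv)); rewrite in_fsetD1 xf eq_sym bx.
Qed.

Lemma destar_in_facet : v \in s' -> stacked_family d F.
Proof.
move=> vs'; have d1 := apex_in_facet_dim1 vs'.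
have v's := apex'_in_facet vs'; have [f1G f1s'] := link_facet_G vs'.
have [x xs xv'] := exists_other_mem v' two_s; have [y ys' yv] := exists_other_mem v two_s'.
have es : s = [fset x; v'] by apply: cardfs2_pair; rewrite ?uF ?d1.
have es' : s' = [fset y; v] by apply: cardfs2_pair; rewrite ?uG ?d1.
have xv : x != v by apply: contraNneq vs => <-.
have yv' : y != v' by apply: contraNneq v's' => <-.
have ef1 : s `\ v' `|` [fset v] = [fset x; v].
  apply/fsetP=> z; rewrite es !inE; case: (z =P v') => [->|_]; last by rewrite orbF.
  by rewrite (eq_sym v' x) (negbTE xv') (eq_sym v' v) (negbTE vv').
have xy : x != y by apply: contraNneq f1s' => exy; rewrite ef1 es' exy.
have vw : v \notin [fset x; y] by rewrite !inE negb_or !(eq_sym v) xv yv.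
have CG : cone_boundary [fset x; y] v `<=` G.
  by apply/fsubsetP=> t; rewrite cone_boundary_pair // => /orP[]/eqP->; rewrite -?es' -?ef1.
have apexG z : z \in G -> v \in z -> z \in cone_boundary [fset x; y] v.
  rewrite cone_boundary_pair // => zG vz.
  by case: (apex_facets_in_facet vs' zG vz) => ->; rewrite ?es' ?ef1 eqxx ?orbT.
suff -> : F = swap_apex G [fset x; y] v v'.
  apply: stacked_swap_apex => //; first by rewrite cardfs2 xy d1.
  by rewrite !inE negb_or !(eq_sym v') xv' yv'.
apply/fsetP=> t; rewrite !inE.
have [vt|vt] := boolP (v \in t).
  rewrite (negbTE (fresh_notin vF vt)) (negbTE (notin_cone_boundary vw vv' vt)) orbF.
  by case: (boolP (t \in G)) => [/apexG ->|]; rewrite ?andbF.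
have -> : t \notin cone_boundary [fset x; y] v by apply: contra vt => /cone_boundary_apex.
have ts' : t != s' by apply: contraNneq vt => ->.
rewrite memF_off_apex // fstarE ts' es' es !cone_boundary_pair //.
have -> : (t == [fset v; v']) = false by apply: contraNF vt => /eqP ->; rewrite !inE eqxx.
by case: (t \in G); case: (t == [fset x; v']); case: (t == [fset y; v']).
Qed.

Lemma destar_step : stacked_family d F.
Proof.
have [vs'|vs'] := boolP (v \in s'); first exact: destar_in_facet.
by case: (s =P s') => [|/eqP]; [exact: destar_same_facet | exact: destar_other_facet].
Qed.

End DestarStep.

Lemma fstar_neq_boundary d (F : cplx) s v (A : {fset nat}) : (1 <= d)%N -> #|` A| = d.+2 ->
  uniform d F -> s \in F -> fresh F v -> (exists2 g, g \in F & g != s) ->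
  fstar F s v != boundary A.
Proof.
move=> d_gt0 hA uF sF vF [g gF gs]; apply/eqP=> eA.
have vs := vF _ sF; have two_s : (2 <= #|` s|)%N by rewrite uF //; lia.
have subA t : t \in fstar F s v -> t `<=` A.
  by rewrite eA => /boundaryP[a _ ->]; apply: fsubsetDl.
have [a1 a1s _] := exists_other_mem v two_s.
have vA : v \in A := fsubsetP (subA _ (mem_fstar_cone F v a1s)) v (apex_cone_facet _ _ _).
have gA : g = A `\ v.
  have : g \in fstar F s v by rewrite fstarE gs gF.
  rewrite eA => /boundaryP[a _ ega]; rewrite ega; case: (a =P v) => [->//|/eqP av].
  by move: (vF _ gF); rewrite ega !inE vA eq_sym av.
have sg : s `<=` g.
  apply/fsubsetP=> x xs; have [b bs bx] := exists_other_mem x two_s.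
  have xA : x \in A.
    by apply: (fsubsetP (subA _ (mem_fstar_cone F v bs))); rewrite !inE xs eq_sym bx.
  by rewrite gA !inE xA andbT; apply: contraNneq vs => <-.
by move: gs; rewrite (fsubset_card_eq sg) ?eqxx // uF ?uF.
Qed.

Lemma stacked_destar d (G : cplx) : (1 <= d)%N -> stacked_family d G -> destar_stacked d G.
Proof.
move=> d_gt0; elim=> [A hA|G' s' v' stG IH s'G v'G] F s v uF sF vF other eY.
  by move/eqP: eY; rewrite (negbTE (fstar_neq_boundary d_gt0 hA uF sF vF other)).
case: (v =P v') => [vv'|/eqP vv']; last exact: destar_step eY vv'.
subst v'; have [uG _ _ _] := stacked_family_pseudomanifold d_gt0 stG.
by rewrite (fstar_inj d_gt0 uF uG sF s'G vF v'G eY).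
Qed.

Lemma genP (F : cplx) (t : {fset nat}) :
  reflect (exists2 f, f \in F & t `<=` f) (t \in gen F).
Proof.
apply: (iffP (bigfcupP _ _ _ _)) => [[f /andP[fF _] tf]|[f fF tf]].
  by exists f => //; rewrite -fpowersetE.
by exists f; rewrite ?fF ?fpowersetE.
Qed.

Lemma vertsP (X : cplx) (u : nat) : reflect (exists2 f, f \in X & u \in f) (u \in verts X).
Proof.
apply: (iffP (bigfcupP _ _ _ _)) => [[f /andP[fF _] uf]|[f fF uf]]; first by exists f.
by exists f; rewrite ?fF.
Qed.

Lemma is_facetP (X : cplx) (f : {fset nat}) :
  reflect (f \in X /\ forall t, t \in X -> ~~ (f `<` t)) (is_facet X f).
Proof. by apply: (iffP andP) => -[fX /allP maxf]; split => //; apply/allP. Qed.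

Lemma is_facet_gen d (F : cplx) f : uniform d F -> is_facet (gen F) f = (f \in F).
Proof.
move=> uF; apply/is_facetP/idP.
  case=> /genP[g gF fg] maxf; have gG : g \in gen F by apply/genP; exists g.
  by move: (maxf g gG); rewrite fproperEneq fg andbT negbK => /eqP->.
move=> fF; split; first by apply/genP; exists f.
move=> t /genP[g gF tg]; apply/negP=> ft.
have := leq_trans (fproper_ltn_card ft) (fsubset_leq_card tg).
by rewrite uF // uF // ltnn.
Qed.

Lemma facets_gen d (F : cplx) : uniform d F -> facets (gen F) = F.
Proof.
move=> uF; apply/fsetP=> f; rewrite /facets !inE (is_facet_gen _ uF).
by case: (boolP (f \in F)) => fF; rewrite ?andbF // andbT; apply/genP; exists f.
Qed.

Lemma is_facet_above (X : cplx) s : s \in X -> exists2 f, is_facet X f & s `<=` f.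
Proof.
move=> sX; have : (#|` [fset t in X | s `<` t]| <= #|` X|)%N.
  by apply: fsubset_leq_card; apply/fsubsetP=> t; rewrite !inE => /andP[].
elim: #|` X| s sX => [|n IHn] s sX hn.
  have e : [fset t in X | s `<` t] = fset0 by apply: cardfs0_eq; lia.
  exists s => //; apply/is_facetP; split => // t tX; apply/negP=> st.
  have : t \in [fset t in X | s `<` t] by rewrite !inE tX st.
  by rewrite e inE.
have [fs|] := boolP (is_facet X s); first by exists s.
rewrite /is_facet sX /= => /allPn[t tX]; rewrite negbK => st.
have [f ff tf] : exists2 f, is_facet X f & t `<=` f.
  apply: (IHn t tX); rewrite -ltnS; apply: leq_trans hn; apply: fproper_ltn_card.
  rewrite fproperEneq; apply/andP; split.
    apply/eqP=> e; have : t \in [fset u in X | s `<` u] by rewrite !inE tX st.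
    by rewrite -e !inE (negbTE (fproper_irrefl _)) andbF.
  apply/fsubsetP=> u; rewrite !inE => /andP[-> tu].
  exact: fproper_sub_trans st (fproper_sub tu).
by exists f => //; apply: fsubset_trans (fproper_sub st) tf.
Qed.

Lemma gen_facets (X : cplx) : is_complex X -> gen (facets X) = X.
Proof.
move=> cX; apply/fsetP=> t; apply/genP/idP.
  by case=> f; rewrite /facets !inE => /andP[fX _] tf; exact: cX fX tf.
move=> tX; have [f ff tf] := is_facet_above tX.
by exists f => //; rewrite /facets !inE ff andbT; case/andP: ff.
Qed.

Lemma star_gen d (F : cplx) s v : uniform d F -> s \in F ->
  star d (gen F) s v = gen (fstar F s v).
Proof.
move=> uF sF; rewrite /star (facets_gen uF); congr (gen (_ `|` _)).
apply/fsetP=> u; apply/imfsetP/cone_boundaryP => -[t].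
  rewrite /= !inE fpowersetE => /andP[ts /eqP ht] ->.
  have [b bs ->] : exists2 b, b \in s & t = s `\ b by apply: fsubset_cardS ts _; rewrite ht uF.
  by exists b.
move=> aS ->; exists (s `\ t) => //.
by rewrite /= !inE fpowersetE fsubsetDl cardfsD1_mem // uF // subn1 eqxx.
Qed.

Lemma std_sphere_gen (A : {fset nat}) : A != fset0 -> std_sphere A = gen (boundary A).
Proof.
move=> An; apply/fsetP=> t; rewrite /std_sphere !inE fpowersetE; apply/idP/genP.
  case/andP=> tA tsub; have /fset0Pn[a] : A `\` t != fset0.
    by rewrite fsetD_eq0; apply: contra tA => At; rewrite eqEfsubset tsub At.
  rewrite !inE => /andP[at_ aA]; exists (A `\ a); first exact: mem_boundary.
  apply/fsubsetP=> x xt; rewrite !inE (fsubsetP tsub _ xt) andbT.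
  by apply: contraNneq at_ => <-.
case=> f /boundaryP[b bA ->] tf; rewrite (fsubset_trans tf (fsubsetDl _ _)) andbT.
by apply/eqP=> tA; have := fsubsetP tf b; rewrite tA bA !inE eqxx => /(_ isT).
Qed.

Lemma verts_gen_fresh (F : cplx) v : (v \notin verts (gen F)) <-> fresh F v.
Proof.
split=> [vF f fF|vF].
  by apply: contra vF => vf; apply/vertsP; exists f => //; apply/genP; exists f.
by apply/negP=> /vertsP[t /genP[f fF tf] vt]; move: (vF f fF); rewrite (fsubsetP tf _ vt).
Qed.

Lemma stacked_sphere_family d (Y : cplx) : (1 <= d)%N -> stacked_sphere d Y ->
  exists2 G, stacked_family d G & Y = gen G.
Proof.
move=> d_gt0; elim=> [A hA|X sg v _ [G stG ->] sgX vX].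
  exists (boundary A); first exact: stacked_boundary.
  by apply: std_sphere_gen; rewrite -cardfs_gt0 hA.
have [uG _ _ _] := stacked_family_pseudomanifold d_gt0 stG.
have sgG : sg \in G by rewrite -(is_facet_gen _ uG).
exists (fstar G sg v); last by rewrite star_gen.
by apply: stacked_fstar => //; apply/verts_gen_fresh.
Qed.

Lemma stacked_family_sphere d (G : cplx) : (1 <= d)%N -> stacked_family d G ->
  stacked_sphere d (gen G).
Proof.
move=> d_gt0; elim=> [A hA|G' s v stG IH sG vG].
  by rewrite -std_sphere_gen; [exact: stacked_base | rewrite -cardfs_gt0 hA].
have [uG _ _ _] := stacked_family_pseudomanifold d_gt0 stG.
rewrite -(star_gen _ uG sG); apply: stacked_step => //; first by rewrite (is_facet_gen _ uG).
exact/verts_gen_fresh.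
Qed.

Lemma normal_pseudomanifold_other_facet d (X : cplx) sg : normal_pseudomanifold d X ->
  is_facet X sg -> exists2 g, g \in facets X & g != sg.
Proof.
move=> [d_gt0 [[cX [_ pX]] [ridge2 _]]] fsg; have sgX : sg \in X by case/andP: fsg.
have [a aS] : exists a, a \in sg.
  by apply/fset0Pn; rewrite -cardfs_gt0 pX.
have hr : #|` sg `\ a| = d by rewrite cardfsD1_mem // pX //; lia.
have := ridge2 _ (cX _ _ sgX (fsubsetDl _ _)) hr.
set S := [fset _ in X | _] => hS.
have /fset0Pn[g] : S `\ sg != fset0.
  by rewrite fsetD_eq0; apply/negP=> /fsubset_leq_card; rewrite hS cardfs1.
by rewrite !inE => /andP[gs /andP[gX /andP[fg _]]]; exists g; rewrite // /facets !inE gX fg.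
Qed.

Theorem lemma4p6 (d : nat) (X Y : {fset {fset nat}}) :
  normal_pseudomanifold d X -> normal_pseudomanifold d Y -> starred d X Y ->
  (stacked_sphere d Y <-> stacked_sphere d X).
Proof.
move=> pmX _ [sg [v [fsg [vX ->]]]].
split=> [stY|]; last by move=> stX; apply: stacked_step.
have [d_gt0 [[cX [_ pX]] _]] := pmX.
have uX : uniform d (facets X) by move=> f; rewrite /facets !inE => /andP[_ /pX].
have eX : X = gen (facets X) by rewrite gen_facets.
have sgF : sg \in facets X by rewrite /facets !inE fsg andbT; case/andP: fsg.
have vF : fresh (facets X) v by apply/verts_gen_fresh; rewrite -eX.
have [G stG eG] := stacked_sphere_family d_gt0 stY.
have [uG _ _ _] := stacked_family_pseudomanifold d_gt0 stG.
have eS : star d X sg v = gen (fstar (facets X) sg v) by rewrite {1}eX star_gen.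
have eGs : fstar (facets X) sg v = G.
  by rewrite -(facets_gen uG) -eG eS (facets_gen (uniform_fstar uX sgF vF)).
rewrite eX; apply: stacked_family_sphere => //.
exact: stacked_destar stG _ _ _ uX sgF vF (normal_pseudomanifold_other_facet pmX fsg) eGs.
Qed.
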